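(* Let $\hat f:L^2(\Omega,\mathcal{F},\mathbb{P};H)\to U$ be Fréchet differentiable at $X_0\in L^2(\Omega,H)$. Then $$m_{D\hat f(X_0)}(A)u:=D\hat f(X_0)(u\mathbf{1}_A),\qquad A\in\mathcal{F},\ u\in H,$$ defines a vector measure $m_{D\hat f(X_0)}:\mathcal{F}\to L(H,U)$, i.e. $m_{D\hat f(X_0)}(\emptyset)=0$ and $m_{D\hat f(X_0)}(\bigcup_i A_i)=\sum_i m_{D\hat f(X_0)}(A_i)$ (convergence in operator norm) for every sequence of pairwise disjoint $A_i\in\mathcal{F}$.
   Context: $(\Omega,\mathcal{F},\mathbb{P})$ is a probability space; $H,U$ are separable real Hilbert spaces; $L(H,U)$ denotes bounded linear operators with the operator norm. *)

From HB Require Import structures.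
From mathcomp Require Import all_boot all_order all_algebra.
From mathcomp Require Import all_classical all_reals all_analysis.
Set Implicit Arguments. Unset Strict Implicit. Unset Printing Implicit Defensive.
Import Order.TTheory GRing.Theory Num.Theory.
Import numFieldNormedType.Exports.
Local Open Scope classical_set_scope.
Local Open Scope ring_scope.

Section Defs.
Context {R : realType}.

Definition separable_hilbert (H : completeNormedModType R) (ip : H -> H -> R) :=
  [/\ (forall x y, ip x y = ip y x),
      (forall a x y z, ip (a *: x + y) z = a * ip x z + ip y z),
      (forall x, `|x| = Num.sqrt (ip x x)) &
      (exists s : nat -> H, dense (range s))].

Context {d : measure_display} {T : measurableType d} (P : probability T R)
        {H : normedModType R}.

Definition strongly_measurable (X : T -> H) :=
  exists g : nat -> T -> H,
    (forall n, finite_set (range (g n)) /\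
               forall y, measurable (g n @^-1` [set y])) /\
    (forall w, g n w @[n --> \oo] --> X w).

Definition inL2 (X : T -> H) :=
  strongly_measurable X /\ (\int[P]_w ((`|X w| ^+ 2)%:E) < +oo)%E.

Definition L2norm (X : T -> H) : R :=
  Num.sqrt (fine (\int[P]_w ((`|X w| ^+ 2)%:E))).

Context {U : normedModType R}.

(* fh : L^2(Omega;H) -> U, represented on representatives; it must respect
   P-a.e. equality on L^2. *)
Definition L2_map (fh : (T -> H) -> U) :=
  forall X Y, inL2 X -> inL2 Y -> {ae P, forall w, X w = Y w} -> fh X = fh Y.

Definition frechet_derivative (fh : (T -> H) -> U) (X0 : T -> H)
    (D : (T -> H) -> U) :=
  [/\ (forall a X Y, inL2 X -> inL2 Y ->
         D (fun w => a *: X w + Y w) = a *: D X + D Y),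
      (exists C : R, forall Y, inL2 Y -> `|D Y| <= C * L2norm Y) &
      (forall eps : R, 0 < eps -> exists delta : R, 0 < delta /\
         forall Y, inL2 Y -> L2norm Y < delta ->
           `|fh (fun w => X0 w + Y w) - fh X0 - D Y| <= eps * L2norm Y)].

Definition frechet_differentiable (fh : (T -> H) -> U) (X0 : T -> H) :=
  exists D, frechet_derivative fh X0 D.

Definition mD (D : (T -> H) -> U) (A : set T) : H -> U :=
  fun u => D (fun w => \1_A w *: u).

End Defs.

Definition bounded_linear {R : realType} {H U : normedModType R} (L : H -> U) :=
  (forall (a : R) x y, L (a *: x + y) = a *: L x + L y) /\
  exists C : R, forall x, `|L x| <= C * `|x|.

Definition opnorm {R : realType} {H U : normedModType R} (L : H -> U) : R :=
  sup [set `|L u| | u in [set u : H | `|u| <= 1]].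

From HB Require Import structures.
From mathcomp Require Import all_boot all_order all_algebra.
From mathcomp Require Import all_classical all_reals all_analysis.
From mathcomp Require Import measurable_realfun.
Import Order.TTheory GRing.Theory Num.Theory.
Import numFieldNormedType.Exports.
Local Open Scope classical_set_scope.
Local Open Scope ring_scope.

(* Linearity of D makes A |-> D (u 1_A) finitely additive, and since
   ||u 1_B||_2 = |u| P(B)^(1/2), boundedness of D gives
   |D (u 1_B)| <= |C| P(B)^(1/2) |u|.  For pairwise disjoint A_i, the
   remainder after n terms of the series is the measure of the tail
   B_n = \bigcup_(k >= n) A_k, so its operator norm is at most
   |C| P(B_n)^(1/2), which tends to 0 by continuity of P from above. *)

Lemma indic_setU_disjoint {T : Type} {R : pzRingType} (A B : set T) x :
  A `&` B = set0 -> \1_(A `|` B) x = \1_A x + \1_B x :> R.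
Proof.
move=> AB0; rewrite !indicE.
have [Ax|nAx] := pselect (A x).
  have nBx : ~ B x by move=> Bx; rewrite -[False]/(set0 x) -AB0.
  by rewrite (mem_set Ax) (memNset nBx) addr0 mem_set //; left.
rewrite (memNset nAx) add0r; have [Bx|nBx] := pselect (B x).
  by rewrite (mem_set Bx) mem_set //; right.
by rewrite !memNset // => -[].
Qed.

Section indicator_vectors.
Context {R : realType} {d : measure_display} {T : measurableType d}
  {H : normedModType R}.
Implicit Types (B : set T) (u : H).

Lemma normr_indic_scale_sqr B u w :
  `|\1_B w *: u| ^+ 2 = `|u| ^+ 2 * \1_B w.
Proof.
rewrite indicE; case: (w \in B).
  by rewrite scale1r mulr1.
by rewrite scale0r normr0 expr0n mulr0.
Qed.

Lemma integral_normr_indic_scale_sqr (mu : {measure set T -> \bar R}) B u :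
  measurable B ->
  (\int[mu]_w (`|\1_B w *: u| ^+ 2)%:E = (`|u| ^+ 2)%:E * mu B)%E.
Proof.
move=> mB; under eq_integral do rewrite normr_indic_scale_sqr EFinM.
rewrite ge0_integralZl_EFin ?sqr_ge0 //; last first.
  by apply/measurable_EFinP; exact: measurable_indic.
by rewrite (integral_indic _ measurableT mB) setIT.
Qed.

Lemma strongly_measurable_indic_scale B u :
  measurable B -> strongly_measurable (fun w => \1_B w *: u).
Proof.
move=> mB; exists (fun _ w => \1_B w *: u); split=> [_|w]; last exact: cvg_cst.
split=> [|y].
  apply: (@sub_finite_set _ _ [set 0; u]).
    move=> _ [w _ <-]; rewrite indicE.
    by case: (w \in B); [right; rewrite scale1r | left; rewrite scale0r].
  by rewrite finite_setU; split; exact: finite_set1.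
rewrite -[X in measurable X]/(\1_B @^-1` ((fun r : R => r *: u) @^-1` [set y])).
by rewrite preimage_indic; repeat case: ifP => _ //; exact: measurableC.
Qed.

Context (P : probability T R).

Lemma inL2_indic_scale B u : measurable B -> inL2 P (fun w => \1_B w *: u).
Proof.
move=> mB; split; first exact: strongly_measurable_indic_scale.
rewrite integral_normr_indic_scale_sqr // lte_mul_pinfty ?lee_fin ?sqr_ge0 //.
exact: le_lt_trans (probability_le1 P mB) (ltry 1).
Qed.

Lemma L2norm_indic_scale B u : measurable B ->
  L2norm P (fun w => \1_B w *: u) = `|u| * Num.sqrt (fine (P B)).
Proof.
move=> mB; rewrite /L2norm integral_normr_indic_scale_sqr //.
by rewrite fineM ?fin_num_measure //= sqrtrM ?sqr_ge0 // sqrtr_sqr normr_id.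
Qed.

End indicator_vectors.

Section operator_norm.
Context {R : realType} {H U : normedModType R} (L : H -> U) (c : R).
Hypothesis L_le : forall u, `|u| <= 1 -> `|L u| <= c.

Let unit_ball_image := [set `|L u| | u in [set u : H | `|u| <= 1]].

Let unit_ball_image0 : unit_ball_image `|L 0|.
Proof. by exists 0; rewrite //= normr0 ler01. Qed.

Let unit_ball_image_ub : ubound unit_ball_image c.
Proof. by move=> _ [u /L_le ? <-]. Qed.

Lemma opnorm_ge0_le : 0 <= opnorm L <= c.
Proof.
apply/andP; split.
  apply: le_trans (normr_ge0 (L 0)) _.
  by apply: ub_le_sup unit_ball_image0; exists c.
exact: ge_sup (ex_intro _ _ unit_ball_image0) unit_ball_image_ub.
Qed.

End operator_norm.

Section tail_union.
Context {T : Type} (A : nat -> set T).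

Definition tail_union n := \bigcup_(k in [set k | (n <= k)%N]) A k.

Lemma tail_union0 : tail_union 0 = \bigcup_k A k.
Proof. by apply: eq_bigcupl. Qed.

Lemma tail_unionS n : tail_union n = A n `|` tail_union n.+1.
Proof.
rewrite /tail_union -bigcup_setU1; apply: eq_bigcupl; split=> k /=.
  by rewrite leq_eqVlt => /orP[/eqP ->|]; [left|right].
by case=> [->|/ltnW].
Qed.

Lemma tail_union_nonincreasing : nonincreasing_seq tail_union.
Proof.
move=> m n mn; apply/subsetPset => x [k /= nk Ak].
by exists k => //=; exact: leq_trans nk.
Qed.

Hypothesis A_disjoint : trivIset setT A.

Lemma setI_tail_unionS n : A n `&` tail_union n.+1 = set0.
Proof.
apply/seteqP; split=> // x [An [k /= nk Ak]].
have n_eq_k : n = k by apply: A_disjoint => //; exists x.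
by move: nk; rewrite n_eq_k ltnn.
Qed.

Lemma bigcap_tail_union : \bigcap_n tail_union n = set0.
Proof.
apply/seteqP; split=> // x tail_x.
have [k _ Ak] := tail_x 0%N I.
have := setI_tail_unionS k; rewrite -subset0; apply.
by split; [exact: Ak | exact: tail_x].
Qed.

End tail_union.

Lemma tail_union_measurable {d : measure_display} {T : measurableType d}
    {A : nat -> set T} n :
  (forall i, measurable (A i)) -> measurable (tail_union A n).
Proof. by move=> mA; apply: bigcup_measurable => k _. Qed.

Lemma measure_tail_union_cvg0 {d : measure_display} {T : measurableType d}
    {R : realType} (mu : {finite_measure set T -> \bar R}) (A : nat -> set T) :
  (forall i, measurable (A i)) -> trivIset setT A ->
  (mu (tail_union A n) @[n --> \oo] --> 0)%E.
Proof.
move=> mA tA; have mtail n := tail_union_measurable n mA.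
rewrite -(measure0 mu) -(bigcap_tail_union _ tA).
apply: nonincreasing_cvg_mu => //; last exact: tail_union_nonincreasing.
  by rewrite -ge0_fin_numE ?fin_num_measure.
exact: bigcap_measurable.
Qed.


Section vector_measure.
Context {R : realType} {d : measure_display} {T : measurableType d}
  {P : probability T R} {H U : normedModType R} {D : (T -> H) -> U}.
Hypothesis D_linear : forall a X Y, inL2 P X -> inL2 P Y ->
  D (fun w => a *: X w + Y w) = a *: D X + D Y.

Lemma mD_setU B1 B2 u : measurable B1 -> measurable B2 -> B1 `&` B2 = set0 ->
  mD D (B1 `|` B2) u = mD D B1 u + mD D B2 u.
Proof.
move=> mB1 mB2 B12; rewrite -[mD D B1 u]scale1r /mD -D_linear;
  try exact: inL2_indic_scale.
by congr D; apply: funext => w; rewrite scale1r -scalerDl indic_setU_disjoint.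
Qed.

Lemma mD_set0 u : mD D set0 u = 0.
Proof.
have := @mD_setU set0 set0 u measurable0 measurable0 (set0I set0).
rewrite setU0 => mD_set0_twice.
by apply: (addrI (mD D set0 u)); rewrite addr0 -mD_set0_twice.
Qed.

Lemma mD_bigcup_sum_tail (A : nat -> set T) n u :
  (forall i, measurable (A i)) -> trivIset setT A ->
  mD D (\bigcup_i A i) u = \sum_(i < n) mD D (A i) u + mD D (tail_union A n) u.
Proof.
move=> mA tA; elim: n => [|n IHn]; first by rewrite big_ord0 add0r tail_union0.
rewrite IHn big_ord_recr /= -addrA (tail_unionS A n) mD_setU //.
  exact: tail_union_measurable.
exact: setI_tail_unionS.
Qed.

Context {C : R}.
Hypothesis D_bounded : forall Y, inL2 P Y -> `|D Y| <= C * L2norm P Y.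

Lemma normr_mD_le B u : measurable B ->
  `|mD D B u| <= `|C| * Num.sqrt (fine (P B)) * `|u|.
Proof.
move=> mB; rewrite -mulrA [_ * `|u|]mulrC -L2norm_indic_scale //.
apply: le_trans (D_bounded _ (inL2_indic_scale P B u mB)) _.
by apply: ler_wpM2r; [exact: sqrtr_ge0 | exact: ler_norm].
Qed.

Lemma mD_bounded_linear B : measurable B -> bounded_linear (mD D B).
Proof.
move=> mB; split.
  move=> a x y; rewrite /mD -D_linear; try exact: inL2_indic_scale.
  by congr D; apply: funext => w; rewrite scalerDr !scalerA mulrC.
by exists (`|C| * Num.sqrt (fine (P B))) => u; exact: normr_mD_le.
Qed.

Lemma opnorm_mD_bigcup_sub_sum_cvg0 (A : nat -> set T) :
  (forall i, measurable (A i)) -> trivIset setT A ->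
  opnorm (fun u => mD D (\bigcup_i A i) u - \sum_(i < n) mD D (A i) u)
    @[n --> \oo] --> 0.
Proof.
move=> mA tA; have mtail n := tail_union_measurable n mA.
pose bound n := `|C| * Num.sqrt (fine (P (tail_union A n))).
have remainder_le n u : `|u| <= 1 ->
    `|mD D (\bigcup_i A i) u - \sum_(i < n) mD D (A i) u| <= bound n.
  move=> u_le1; rewrite (mD_bigcup_sum_tail A n u mA tA) addrC addKr.
  apply: le_trans (normr_mD_le _ u (mtail n)) _.
  by rewrite -[leRHS]mulr1 ler_wpM2l ?mulr_ge0 ?sqrtr_ge0.
apply: (@squeeze_cvgr _ _ _ _ (fun=> 0) bound); [|exact: cvg_cst|].
  by near=> n; apply: opnorm_ge0_le; exact: remainder_le.
have P_tail : fine (P (tail_union A n)) @[n --> \oo] --> 0.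
  exact/fine_cvg/(measure_tail_union_cvg0 P A mA tA).
rewrite -(mulr0 `|C|) -sqrtr0; apply: cvgM; first exact: cvg_cst.
exact: cvg_comp P_tail (@sqrt_continuous R 0).
Unshelve. all: by end_near.
Qed.

End vector_measure.

Theorem lemma1p2 (R : realType) (d : measure_display) (T : measurableType d)
  (P : probability T R)
  (H : completeNormedModType R) (ipH : H -> H -> R)
  (U : completeNormedModType R) (ipU : U -> U -> R)
  (fh : (T -> H) -> U) (X0 : T -> H) (D : (T -> H) -> U) :
  separable_hilbert ipH -> separable_hilbert ipU ->
  L2_map P fh -> inL2 P X0 ->
  frechet_derivative P fh X0 D ->
  (forall A, measurable A -> bounded_linear (mD D A)) /\
  (forall u, mD D set0 u = 0) /\
  (forall A : nat -> set T, (forall i, measurable (A i)) ->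
     trivIset setT A ->
     opnorm (fun u => mD D (\bigcup_i A i) u - \sum_(i < n) mD D (A i) u)
       @[n --> \oo] --> 0).
Proof.
move=> _ _ _ _ [D_linear [C D_bounded] _].
split; first exact: (mD_bounded_linear D_linear D_bounded).
split; first exact: (mD_set0 D_linear).
exact: (opnorm_mD_bigcup_sub_sum_cvg0 D_linear D_bounded).
Qed.
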